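(* Let $Z=(X_1,\dots,X_M)$ be a random vector (full data), $[M]=\{X_1,\dots,X_M\}$, and let $R$ be a random variable taking values in a finite collection $Q$ of nonempty subsets of $[M]$ with $\pi_r=\mathbb{P}(R=r)$ for $r\in Q$. Assume (MCAR) $R$ is independent of $Z$, and (positivity) $[M]\in Q$ with $\pi_{[M]}>c>0$. For $s\subseteq[M]$ let $\lambda_s=\sum_{r\in Q,\ s\subseteq r}\pi_r$, and for $r\in Q$, $r\neq[M]$, define $$\omega_r=\sum_{s:\ r\subseteq s\subseteq[M]}(-1)^{|s|-|r|}\frac{\mathbb{I}(R\supseteq s)}{\lambda_s}.$$ Let $\psi^F:\mathcal{Z}\times\Omega\to\mathbb{R}^d$ and $\theta^\star\in\Omega$ satisfy $\mathbb{E}[\psi^F(Z,\theta^\star)]=\mathbf{0}_d$ with $\mathbb{E}[\psi^F(Z,\theta)^T\psi^F(Z,\theta)]<\infty$. For each $r\in Q$, $r\neq[M]$, let $\mathcal{F}_r$ be a fixed (non-random, e.g. pre-trained) measurable $\mathbb{R}^d$-valued function of $X_r$ with $\mathbb{E}\|\mathcal{F}_r(X_r)\|<\infty$, serving as a proxy either for $\mathbb{E}[\psi^F(Z,\theta^\star)\mid X_r]$ or for $\psi^F(\mathbb{E}[Z\mid X_r],\theta^\star)$. Then for every choice of real numbers $\alpha=\{\alpha_r: r\in Q, r\neq[M]\}$, the function $$\psi_\alpha(Z;\theta^\star)=\frac{\mathbb{I}(R=[M])}{\pi_{[M]}}\psi^F(Z,\theta^\star)+\sum_{r\in Q,\ r\neq[M]}\alpha_r\,\omega_r\,\mathcal{F}_r(X_r)$$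 satisfies $\mathbb{E}[\psi_\alpha(Z;\theta^\star)]=\mathbf{0}_d$, the expectation being over the joint distribution of $(Z,R)$.
   Context: $X_r$ denotes the sub-vector of $Z$ consisting of the modalities in $r$; $\mathbb{I}(\cdot)$ is the indicator function; $|s|$ is the cardinality of $s$. $\Omega\subset\mathbb{R}^d$ is the parameter space and $\mathcal{Z}$ the sample space of $Z$. *)

From HB Require Import structures.
From mathcomp Require Import all_boot all_order all_algebra.
From mathcomp Require Import all_classical all_reals all_analysis.
Set Implicit Arguments. Unset Strict Implicit. Unset Printing Implicit Defensive.
Import Order.TTheory GRing.Theory Num.Theory.
Local Open Scope ring_scope.

Definition fullM (M : nat) : {set 'I_M} := finset.setT.

Section MissingData.
Context {dT : measure_display} {T : measurableType dT} {R : realType}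
        (P : probability T R) {M : nat} (Rv : T -> {set 'I_M}).

Definition pi_ (r : {set 'I_M}) : R := fine (P [set t | Rv t = r]%classic).

Definition lambda_ (Q : {set {set 'I_M}}) (s : {set 'I_M}) : R :=
  \sum_(r in Q | s \subset r) pi_ r.

Definition omega_ (Q : {set {set 'I_M}}) (r : {set 'I_M}) (t : T) : R :=
  \sum_(s : {set 'I_M} | r \subset s)
     (-1) ^+ (#|s| - #|r|)%N * (s \subset Rv t)%:R / lambda_ Q s.

Definition psi_alpha {Zs : Type} {d : nat} (Q : {set {set 'I_M}})
  (Z : T -> Zs) (psiF : Zs -> 'rV[R]_d -> 'rV[R]_d) (theta : 'rV[R]_d)
  (F : {set 'I_M} -> Zs -> 'rV[R]_d) (alpha : {set 'I_M} -> R) (t : T)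
  : 'rV[R]_d :=
  ((Rv t == fullM M)%:R / pi_ (fullM M)) *: psiF (Z t) theta
  + \sum_(r in Q | r != fullM M) (alpha r * omega_ Q r t) *: F r (Z t).

End MissingData.

(* Under MCAR, E[f(R) g(Z)] = (sum_r f(r) pi_r) E[g(Z)] for every function f of
   the missingness pattern.  For the inverse probability weight
   f(r) = I(r = [M]) / pi_[M] the pi-average is 1, so that term has mean
   E[psi^F(Z, theta_star)] = 0.  For omega_r, exchanging the sums gives the
   pi-average sum_(s >= r) (-1)^(|s|-|r|) lambda_s^-1 sum_(r' >= s) pi_r'
   = sum_(s >= r) (-1)^(|s|-|r|), which vanishes when r <> [M]: toggling a
   fixed modality outside r is a sign-reversing involution on the supersets
   of r. *)

From HB Require Import structures.
From mathcomp Require Import all_boot all_order all_algebra.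
From mathcomp Require Import all_classical all_reals all_analysis.
From mathcomp Require Import measurable_realfun lra.
Import Order.TTheory GRing.Theory Num.Theory HBNNSimple.
Set Implicit Arguments. Unset Strict Implicit.
Local Open Scope classical_set_scope.
Local Open Scope ring_scope.

Section integral_mrestr.
Local Open Scope ereal_scope.
Context d (T : measurableType d) (R : realType).
Variables (mu : {measure set T -> \bar R}) (D : set T) (mD : measurable D).

Let integral_mrestr_nnsfun (h : {nnsfun T >-> R}) :
  \int[mrestr mu mD]_x (h x)%:E = \int[mu]_(x in D) (h x)%:E.
Proof.
have fsumE (nu : {measure set T -> \bar R}) A : measurable A ->
    \int[nu]_(x in A) (h x)%:E =
    (\sum_(r \in range h) r%:E * \int[nu]_(x in A) (\1_(h @^-1` [set r]) x)%:E).
  move=> mA; under eq_integral do rewrite fimfunE -fsumEFin//.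
  rewrite ge0_integral_fsum//; last 2 first.
  - by move=> r; exact/measurable_EFinP/measurableT_comp.
  - by move=> n x _; rewrite EFinM nnfun_muleindic_ge0.
  by apply: eq_fsbigr => r _; rewrite integralZl_indic_nnsfun.
rewrite !fsumE//; apply: eq_fsbigr => r _.
by rewrite !integral_indic//= /mrestr setIT.
Qed.

Lemma ge0_integral_mrestr (f : T -> \bar R) : measurable_fun setT f ->
  (forall x, 0 <= f x) ->
  \int[mrestr mu mD]_x f x = \int[mu]_(x in D) f x.
Proof.
move=> mf f0; pose f_ := nnsfun_approx measurableT mf.
have approx_lim (nu : {measure set T -> \bar R}) A : measurable A ->
    \int[nu]_(x in A) f x = limn (fun n => \int[nu]_(x in A) (f_ n x)%:E).
  move=> mA; rewrite -monotone_convergence//=.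
  - apply: eq_integral => x _; apply/esym/cvg_lim => //.
    exact: cvg_nnsfun_approx.
  - by move=> n; exact/measurable_EFinP/measurable_funTS.
  - by move=> n x _; rewrite lee_fin.
  - by move=> x _ a b ab; rewrite lee_fin; exact/lefP/nd_nnsfun_approx.
rewrite !approx_lim//; congr (limn _); apply/funext => n.
exact: integral_mrestr_nnsfun.
Qed.

End integral_mrestr.

Lemma integral_sum_pred d (T : measurableType d) (R : realType)
    (mu : {measure set T -> \bar R}) (D : set T) (I : Type) (s : seq I)
    (P : pred I) (f : I -> T -> \bar R) : measurable D ->
  (forall i, P i -> mu.-integrable D (f i)) ->
  (\int[mu]_(x in D) \sum_(i <- s | P i) f i x =
   \sum_(i <- s | P i) \int[mu]_(x in D) f i x)%E.
Proof.
move=> mD intf; elim: s => [|i s IHs].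
  by under eq_integral do rewrite big_nil; rewrite big_nil integral0.
under eq_integral do rewrite big_cons; rewrite big_cons.
case: ifPn => // Pi; rewrite integralD// ?IHs//.
- exact: intf.
- exact: integrable_sum.
Qed.

Lemma ler_norm_sqrt (R : rcfType) (a S : R) : a ^+ 2 <= S -> `|a| <= Num.sqrt S.
Proof. by move=> aS; rewrite -sqrtr_sqr ler_wsqrtr. Qed.

Lemma ler_norm_1D (R : realFieldType) (a S : R) : a ^+ 2 <= S -> `|a| <= 1 + S.
Proof.
move=> aS; rewrite -real_normK ?num_real// in aS.
have := normr_ge0 a; move: aS; move: `|a| => b; nra.
Qed.

Section integrable_coord.
Local Open Scope ereal_scope.
Context d (T : measurableType d) (R : realType) (n : nat).
Variables (u : T -> 'rV[R]_n) (j : 'I_n).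
Hypothesis mcoord : forall k, measurable_fun setT (fun x => u x ord0 k).

Let sqr_coord_le x : (u x ord0 j ^+ 2 <= \sum_k u x ord0 k ^+ 2)%R.
Proof. by rewrite (bigD1 j)//= lerDl sumr_ge0// => k _; exact: sqr_ge0. Qed.

Let sumsqr_ge0 x : (0 <= \sum_k u x ord0 k ^+ 2)%R.
Proof. by rewrite sumr_ge0// => k _; exact: sqr_ge0. Qed.

Let measurable_sumsqr : measurable_fun setT (fun x => \sum_k u x ord0 k ^+ 2)%R.
Proof. by apply: measurable_sum => k; exact: measurable_funX. Qed.

Lemma integrable_coord_of_norm (mu : {measure set T -> \bar R}) :
  \int[mu]_x (Num.sqrt (\sum_k u x ord0 k ^+ 2))%:E < +oo ->
  mu.-integrable setT (fun x => (u x ord0 j)%:E).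
Proof.
move=> norm_fin.
have int_norm : mu.-integrable setT
    (fun x => (Num.sqrt (\sum_k u x ord0 k ^+ 2))%:E).
  apply/integrableP; split.
    apply/measurable_EFinP/measurableT_comp => //.
    exact: continuous_measurable_fun (@sqrt_continuous R).
  by under eq_integral do rewrite gee0_abs ?lee_fin ?sqrtr_ge0//.
apply: (le_integrable measurableT _ _ int_norm); first exact/measurable_EFinP.
move=> x _; rewrite !abse_EFin lee_fin [X in (_ <= X)%R]ger0_norm ?sqrtr_ge0//.
exact/ler_norm_sqrt/sqr_coord_le.
Qed.

Lemma integrable_coord_of_sqnorm (mu : {finite_measure set T -> \bar R}) :
  \int[mu]_x (\sum_k u x ord0 k ^+ 2)%:E < +oo ->
  mu.-integrable setT (fun x => (u x ord0 j)%:E).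
Proof.
move=> sqnorm_fin.
have int_sqnorm : mu.-integrable setT (fun x => (\sum_k u x ord0 k ^+ 2)%:E).
  apply/integrableP; split; first exact/measurable_EFinP.
  by under eq_integral do rewrite gee0_abs ?lee_fin ?sumsqr_ge0//.
have int_1D := integrableD measurableT
  (finite_measure_integrable_cst mu 1 measurableT) int_sqnorm.
apply: (le_integrable measurableT _ _ int_1D); first exact/measurable_EFinP.
move=> x _; rewrite !abse_EFin lee_fin [X in (_ <= X)%R]ger0_norm.
  exact/ler_norm_1D/sqr_coord_le.
by rewrite addr_ge0 ?sumsqr_ge0.
Qed.

End integrable_coord.

Lemma integrable_indicM d (T : measurableType d) (R : realType)
    (mu : {measure set T -> \bar R}) (A : set T) (h : T -> R) :
  measurable A -> mu.-integrable setT (fun x => (h x)%:E) ->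
  mu.-integrable setT (fun x => (\1_A x * h x)%:E).
Proof.
move=> mA ih; apply: (le_integrable measurableT _ _ ih).
  apply/measurable_EFinP/measurable_funM; first exact: measurable_indic.
  by have /integrableP[/measurable_EFinP] := ih.
move=> x _; rewrite !abse_EFin lee_fin normrM indicE.
by case: (x \in A); rewrite ?normr1 ?normr0 ?mul1r ?mul0r.
Qed.

Lemma sum_sign_supsets (R : numDomainType) (I : finType) (r : {set I}) :
  r != finset.setT ->
  \sum_(s : {set I} | r \subset s) (-1) ^+ (#|s| - #|r|) = 0 :> R.
Proof.
rewrite -properT => /properP[_ [i _ i_notin_r]].
pose toggle (s : {set I}) := if i \in s then s :\ i else i |: s.
have toggleK : involutive toggle.
  move=> s; rewrite /toggle; have [i_s|i_s] := boolP (i \in s).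
    by rewrite setD11 finset.setD1K.
  by rewrite setU11 finset.setU1K.
have sub_toggle s : (r \subset toggle s) = (r \subset s).
  rewrite /toggle; case: ifPn => i_s; first by rewrite subsetD1 i_notin_r andbT.
  apply/idP/idP => r_s.
    apply/fintype.subsetP => x x_r; have := fintype.subsetP r_s x x_r.
    by rewrite !inE; case/orP => // /eqP x_i; rewrite -x_i x_r in i_notin_r.
  exact: (fintype.subset_trans r_s (finset.subsetUr _ _)).
have sign_toggle (s : {set I}) : r \subset s ->
    (-1) ^+ (#|toggle s| - #|r|) = - (-1) ^+ (#|s| - #|r|) :> R.
  move=> r_s; rewrite /toggle; case: ifPn => i_s.
    have r_si : r \subset s :\ i by rewrite subsetD1 r_s i_notin_r.
    rewrite [#|s|](cardsD1 i s) i_s add1n subSn ?subset_leq_card//.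
    by rewrite exprS mulN1r opprK.
  by rewrite cardsU1 i_s add1n subSn ?subset_leq_card// exprS mulN1r.
set S := LHS; have : S = - S.
  rewrite {1}/S (reindex_inj (can_inj toggleK)) /= -sumrN.
  apply: eq_big => [s|s r_s]; first exact: sub_toggle.
  by apply: sign_toggle; rewrite -sub_toggle.
by move/eqP; rewrite -subr_eq0 opprK -mulr2n mulrn_eq0 /= => /eqP.
Qed.

Section independent_event.
Local Open Scope ereal_scope.
Context d (T : measurableType d) (R : realType) dZ (Zs : measurableType dZ).
Variables (P : probability T R) (Z : T -> Zs) (A : set T).
Hypotheses (mZ : measurable_fun setT Z) (mA : measurable A).
Hypothesis indepAZ : forall B, measurable B ->
  P (A `&` Z @^-1` B) = P A * P (Z @^-1` B).

Lemma ge0_integral_indep (f : Zs -> \bar R) : measurable_fun setT f ->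
  (forall z, 0 <= f z) ->
  \int[P]_(x in A) f (Z x) = P A * \int[P]_x f (Z x).
Proof.
move=> mf f0.
have PAE : P A = (fine (P A))%:E by rewrite fineK// fin_num_measure.
have PA_ge0 : (0 <= fine (P A))%R by rewrite fine_ge0.
rewrite -ge0_integral_mrestr//; last exact: measurableT_comp.
transitivity (\int[pushforward (mrestr P mA) Z]_y f y).
  by rewrite ge0_integral_pushforward// preimage_setT.
rewrite (eq_measure_integral
  (mscale (NngNum PA_ge0) (pushforward P Z))); last first.
  move=> B mB _; change (P (Z @^-1` B `&` A) = (fine (P A))%:E * P (Z @^-1` B)).
  by rewrite setIC indepAZ// -PAE.
by rewrite ge0_integral_mscale//= -PAE ge0_integral_pushforward// preimage_setT.
Qed.

Lemma integral_indic_indep (g : Zs -> R) : measurable_fun setT g ->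
  P.-integrable setT (fun x => (g (Z x))%:E) ->
  \int[P]_x (\1_A x * g (Z x))%:E = P A * \int[P]_x (g (Z x))%:E.
Proof.
move=> mg ig.
have mEg : measurable_fun setT (EFin \o g) by exact/measurable_EFinP.
transitivity (\int[P]_(x in A) (g (Z x))%:E).
  rewrite [RHS]integral_mkcond; apply: eq_integral => x _.
  by rewrite patchE indicE; case: ifPn; rewrite ?mul1r ?mul0r.
have posE : (fun x => (g (Z x))%:E)^\+ = (EFin \o g)^\+ \o Z.
  by apply/funext => x; rewrite /= !funeposE.
have negE : (fun x => (g (Z x))%:E)^\- = (EFin \o g)^\- \o Z.
  by apply/funext => x; rewrite /= !funenegE.
rewrite integralE [in RHS]integralE posE negE.
rewrite (@ge0_integral_indep (EFin \o g)^\+); last 2 first.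
- exact: measurable_funepos.
- exact: funepos_ge0.
rewrite (@ge0_integral_indep (EFin \o g)^\-); last 2 first.
- exact: measurable_funeneg.
- exact: funeneg_ge0.
rewrite [RHS]muleBr ?fin_num_measure//.
apply: fin_num_adde_defl; rewrite fin_numN.
by rewrite -negE; exact: integrable_neg_fin_num.
Qed.

End independent_event.

Section missing_completely_at_random.
Context dT (T : measurableType dT) (R : realType) dZ (Zs : measurableType dZ).
Variables (P : probability T R) (Z : T -> Zs) (M : nat) (Rv : T -> {set 'I_M}).
Hypotheses (mZ : measurable_fun setT Z)
  (mRv : forall r, measurable [set t | Rv t = r]).
Hypothesis mcar : forall r B, measurable B ->
  P ([set t | Rv t = r] `&` Z @^-1` B) =
  (P [set t | Rv t = r] * P (Z @^-1` B))%E.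

Lemma pattern_funE (f : {set 'I_M} -> R) t :
  f (Rv t) = \sum_r f r * \1_[set t | Rv t = r] t.
Proof.
rewrite (bigD1 (Rv t))//= indicE mem_set// mulr1 big1 ?addr0// => r r_Rv.
by rewrite indicE memNset ?mulr0//= => /esym/eqP; rewrite (negbTE r_Rv).
Qed.

Let integrable_patternM (f : {set 'I_M} -> R) (h : T -> R) r :
  P.-integrable setT (fun x => (h x)%:E) ->
  P.-integrable setT (fun x => (f r * \1_[set t | Rv t = r] x * h x)%:E).
Proof.
move=> ih; under eq_fun do rewrite -mulrA EFinM.
exact/integrableZl/integrable_indicM.
Qed.

Lemma integrable_pattern_mul (f : {set 'I_M} -> R) (h : T -> R) :
  P.-integrable setT (fun x => (h x)%:E) ->
  P.-integrable setT (fun x => (f (Rv x) * h x)%:E).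
Proof.
move=> ih; under eq_fun do rewrite pattern_funE big_distrl -sumEFin.
by apply: integrable_sum => // r _; exact: integrable_patternM.
Qed.

Lemma integral_pattern_mul (f : {set 'I_M} -> R) (g : Zs -> R) :
  measurable_fun setT g -> P.-integrable setT (fun x => (g (Z x))%:E) ->
  (\int[P]_x (f (Rv x) * g (Z x))%:E =
   (\sum_r f r * pi_ P Rv r)%:E * \int[P]_x (g (Z x))%:E)%E.
Proof.
move=> mg ig.
have piE r : P [set t | Rv t = r] = (pi_ P Rv r)%:E.
  by rewrite fineK ?fin_num_measure.
under eq_integral do rewrite pattern_funE big_distrl -sumEFin.
rewrite integral_sum//; last by move=> r; exact: integrable_patternM.
have termE r : (\int[P]_x (f r * \1_[set t | Rv t = r] x * g (Z x))%:E =
    (f r * pi_ P Rv r)%:E * \int[P]_x (g (Z x))%:E)%E.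
  under eq_integral do rewrite -mulrA EFinM.
  rewrite integralZl//; last exact: integrable_indicM.
  rewrite integral_indic_indep//; last exact: mcar.
  by rewrite piE muleA -EFinM.
rewrite (eq_bigr _ (fun r _ => termE r)).
rewrite -(fineK (integrable_fin_num measurableT ig)).
by under eq_bigr do rewrite -EFinM; rewrite sumEFin -big_distrl.
Qed.

End missing_completely_at_random.

Section pattern_weights.
Context dT (T : measurableType dT) (R : realType) (P : probability T R).
Variables (M : nat) (Rv : T -> {set 'I_M}) (Q : {set {set 'I_M}}).
Hypotheses (RvQ : forall t, Rv t \in Q) (fullQ : fullM M \in Q).
Hypothesis pi_full_gt0 : 0 < pi_ P Rv (fullM M).

Lemma pi_ge0 r : 0 <= pi_ P Rv r.
Proof. by rewrite fine_ge0. Qed.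

Lemma pi_notin r : r \notin Q -> pi_ P Rv r = 0.
Proof.
move=> rQ; rewrite /pi_ (_ : [set t | Rv t = r] = set0) ?measure0//.
by apply/seteqP; split=> // t /= Rv_r; move: rQ; rewrite -Rv_r RvQ.
Qed.

Lemma lambdaE s :
  lambda_ P Rv Q s = \sum_(r : {set 'I_M} | s \subset r) pi_ P Rv r.
Proof.
rewrite /lambda_ big_mkcondl /=; apply: eq_bigr => r _.
by case: ifPn => // /pi_notin ->.
Qed.

Lemma lambda_gt0 s : 0 < lambda_ P Rv Q s.
Proof.
rewrite /lambda_ (bigD1 (fullM M)) /=; last by rewrite fullQ finset.subsetT.
by rewrite ltr_wpDr// sumr_ge0// => r _; exact: pi_ge0.
Qed.

Definition omega_weight (r R' : {set 'I_M}) : R :=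
  \sum_(s : {set 'I_M} | r \subset s)
     (-1) ^+ (#|s| - #|r|) * (s \subset R')%:R / lambda_ P Rv Q s.

Lemma sum_omega_weight_pi r : r != fullM M ->
  \sum_(R' : {set 'I_M}) omega_weight r R' * pi_ P Rv R' = 0.
Proof.
move=> r_full; under eq_bigr do rewrite big_distrl /=.
rewrite exchange_big /= -[RHS](@sum_sign_supsets R _ r r_full).
apply: eq_bigr => s r_s.
rewrite -[RHS](divfK (lt0r_neq0 (lambda_gt0 s))) [X in _ = _ * X]lambdaE.
rewrite big_distrr [RHS]big_mkcond /=; apply: eq_bigr => R' _.
by case: (s \subset R'); rewrite ?mulr1 ?mulr0 ?mul0r.
Qed.

Lemma sum_full_weight_pi :
  \sum_(R' : {set 'I_M})
    (R' == fullM M)%:R / pi_ P Rv (fullM M) * pi_ P Rv R' = 1.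
Proof.
rewrite (bigD1 (fullM M))//= eqxx mul1r mulVf ?lt0r_neq0// big1 ?addr0//.
by move=> R' /negbTE ->; rewrite !mul0r.
Qed.

End pattern_weights.

Section unbiased_terms.
Context dT (T : measurableType dT) (R : realType) dZ (Zs : measurableType dZ).
Variables (P : probability T R) (Z : T -> Zs) (M : nat) (Rv : T -> {set 'I_M}).
Variable Q : {set {set 'I_M}}.
Hypotheses (mZ : measurable_fun setT Z)
  (mRv : forall r, measurable [set t | Rv t = r]).
Hypothesis mcar : forall r B, measurable B ->
  P ([set t | Rv t = r] `&` Z @^-1` B) =
  (P [set t | Rv t = r] * P (Z @^-1` B))%E.
Hypotheses (RvQ : forall t, Rv t \in Q) (fullQ : fullM M \in Q).
Hypothesis pi_full_gt0 : 0 < pi_ P Rv (fullM M).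

Lemma integral_full_mul (g : Zs -> R) : measurable_fun setT g ->
  P.-integrable setT (fun x => (g (Z x))%:E) ->
  (\int[P]_x ((Rv x == fullM M)%:R / pi_ P Rv (fullM M) * g (Z x))%:E =
   \int[P]_x (g (Z x))%:E)%E.
Proof.
move=> mg ig; rewrite (integral_pattern_mul mZ mRv mcar
  (fun R' => (R' == fullM M)%:R / pi_ P Rv (fullM M)))//.
by rewrite sum_full_weight_pi// mul1e.
Qed.

Lemma integral_omega_mul r (g : Zs -> R) : r != fullM M ->
  measurable_fun setT g -> P.-integrable setT (fun x => (g (Z x))%:E) ->
  (\int[P]_x (omega_ P Rv Q r x * g (Z x))%:E = 0)%E.
Proof.
move=> r_full mg ig.
by rewrite (integral_pattern_mul mZ mRv mcar (omega_weight P Rv Q r))//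
  sum_omega_weight_pi// mul0e.
Qed.

Variables (G : {set 'I_M} -> Zs -> R) (alpha : {set 'I_M} -> R).
Hypothesis mG : forall r, r \in Q -> r != fullM M -> measurable_fun setT (G r).
Hypothesis iG : forall r, r \in Q -> r != fullM M ->
  P.-integrable setT (fun x => (G r (Z x))%:E).

Let augmentation_term r x := alpha r * (omega_ P Rv Q r x * G r (Z x)).

Let integrable_augmentation_term r : r \in Q -> r != fullM M ->
  P.-integrable setT (fun x => (augmentation_term r x)%:E).
Proof.
move=> rQ r_full; under eq_fun do rewrite EFinM.
exact/integrableZl/(integrable_pattern_mul mRv (omega_weight P Rv Q r))/iG.
Qed.

Lemma integrable_augmentation : P.-integrable setT
  (fun x => (\sum_(r in Q | r != fullM M) augmentation_term r x)%:E).
Proof.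
under eq_fun do rewrite -sumEFin.
by apply: integrable_sum => // r /andP[]; exact: integrable_augmentation_term.
Qed.

Lemma integral_augmentation :
  (\int[P]_x (\sum_(r in Q | r != fullM M) augmentation_term r x)%:E = 0)%E.
Proof.
under eq_integral do rewrite -sumEFin.
rewrite integral_sum_pred//; last first.
  by move=> r /andP[]; exact: integrable_augmentation_term.
apply: big1 => r /andP[rQ r_full]; under eq_integral do rewrite EFinM.
rewrite integralZl//; last first.
  exact: (integrable_pattern_mul mRv (omega_weight P Rv Q r) (iG rQ r_full)).
by rewrite (integral_omega_mul r_full (mG rQ r_full) (iG rQ r_full)) mule0.
Qed.

End unbiased_terms.

Lemma psi_alpha_coordE dT (T : measurableType dT) (R : realType)
    (P : probability T R) (M : nat) (Rv : T -> {set 'I_M}) (Zs : Type)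
    (d : nat) (Q : {set {set 'I_M}}) (Z : T -> Zs)
    (psiF : Zs -> 'rV[R]_d -> 'rV[R]_d) (theta : 'rV[R]_d)
    (F : {set 'I_M} -> Zs -> 'rV[R]_d) (alpha : {set 'I_M} -> R) t j :
  psi_alpha P Rv Q Z psiF theta F alpha t ord0 j =
  (Rv t == fullM M)%:R / pi_ P Rv (fullM M) * psiF (Z t) theta ord0 j +
  \sum_(r in Q | r != fullM M) alpha r * (omega_ P Rv Q r t * F r (Z t) ord0 j).
Proof.
rewrite /psi_alpha !mxE summxE; congr (_ + _).
by apply: eq_bigr => r _; rewrite !mxE mulrA.
Qed.

Theorem proposition2
  (dT : measure_display) (T : measurableType dT) (R : realType)
  (P : probability T R)
  (M d : nat)
  (* sample space of the full data Z = (X_1,...,X_M), with modality maps *)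
  (dZ : measure_display) (Zs : measurableType dZ)
  (V : Type) (coord : 'I_M -> Zs -> V)
  (Z : T -> Zs)
  (* missingness pattern R with values in Q *)
  (Rv : T -> {set 'I_M}) (Q : {set {set 'I_M}})
  (c : R)
  (Omega : set 'rV[R]_d) (psiF : Zs -> 'rV[R]_d -> 'rV[R]_d)
  (theta_star : 'rV[R]_d)
  (F : {set 'I_M} -> Zs -> 'rV[R]_d)
  (alpha : {set 'I_M} -> R) :
  measurable_fun setT Z ->
  (forall r, measurable [set t | Rv t = r]) ->
  (forall t, Rv t \in Q) ->
  (forall r, r \in Q -> r != finset.set0) ->
  (* MCAR: R independent of Z *)
  (forall (r : {set 'I_M}) (B : set Zs), measurable B ->
     P ([set t | Rv t = r] `&` Z @^-1` B)
     = (P [set t | Rv t = r] * P (Z @^-1` B))%E) ->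
  (* positivity *)
  fullM M \in Q -> 0 < c -> c < pi_ P Rv (fullM M) ->
  (* estimating equation *)
  Omega theta_star ->
  (forall theta, Omega theta -> forall j : 'I_d,
     measurable_fun setT (fun z => psiF z theta ord0 j)) ->
  (forall theta, Omega theta ->
     (\int[P]_t (\sum_(j < d) (psiF (Z t) theta ord0 j) ^+ 2)%:E < +oo)%E) ->
  (forall j : 'I_d, ('E_P[fun t => psiF (Z t) theta_star ord0 j] = 0)%E) ->
  (* proxies F_r: measurable functions of X_r with finite first moment *)
  (forall r, r \in Q -> r != fullM M -> forall j : 'I_d,
     measurable_fun setT (fun z => F r z ord0 j)) ->
  (forall r, r \in Q -> r != fullM M -> forall z z' : Zs,
     (forall i, i \in r -> coord i z = coord i z') -> F r z = F r z') ->
  (forall r, r \in Q -> r != fullM M ->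
     (\int[P]_t (Num.sqrt (\sum_(j < d) (F r (Z t) ord0 j) ^+ 2))%:E < +oo)%E) ->
  forall j : 'I_d,
    ('E_P[fun t => psi_alpha P Rv Q Z psiF theta_star F alpha t ord0 j] = 0)%E.
Proof.
move=> mZ mRv RvQ _ mcar fullQ c_gt0 c_lt_pi Omega_theta mpsi psi_sqnorm Epsi
  mF _ F_norm j.
have pi_gt0 := lt_trans c_gt0 c_lt_pi.
have mpsiZ k : measurable_fun setT (fun x => psiF (Z x) theta_star ord0 k).
  exact: measurableT_comp (mpsi _ Omega_theta k) mZ.
have ipsi := integrable_coord_of_sqnorm j mpsiZ (psi_sqnorm _ Omega_theta).
have iF r : r \in Q -> r != fullM M ->
    P.-integrable setT (fun x => (F r (Z x) ord0 j)%:E).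
  move=> rQ r_full; apply: (integrable_coord_of_norm j _ (F_norm r rQ r_full)).
  by move=> k; exact: measurableT_comp (mF r rQ r_full k) mZ.
have mFj r rQ r_full := mF r rQ r_full j.
rewrite unlock; under eq_integral do rewrite psi_alpha_coordE EFinD.
rewrite integralD//; last 2 first.
- exact: (integrable_pattern_mul mRv
    (fun R' => (R' == fullM M)%:R / pi_ P Rv (fullM M)) ipsi).
- exact: (integrable_augmentation (G := fun r z => F r z ord0 j)
    mRv alpha iF).
rewrite (integral_full_mul mZ mRv mcar pi_gt0 (mpsi _ Omega_theta j) ipsi).
rewrite (integral_augmentation (G := fun r z => F r z ord0 j)
  mZ mRv mcar RvQ fullQ pi_gt0 alpha mFj iF) adde0.
by have := Epsi j; rewrite unlock.
Qed.
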